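(* Let $\mathbf G$ be a connected reductive complex algebraic group with split real form $G=\mathbf G^\sigma$ (identity component $G_0$), let $\mathbf X$ be a strict wonderful $\mathbf G$-variety of rank $r$ with real locus $X$, and let $P=P^uL$, $T$, $Z\cong\mathbb R^r$, the spherical roots $\gamma_1,\dots,\gamma_r$, and the charts $(U_g,\phi_g^{-1})$, $g\in G_0$, be as described in the context. For $x\in U_g$ let $z_j(x)$ denote the $(s+j)$-th component of $\phi_g^{-1}(x)\in\mathbb R^{s+r}$, and for $h\in G_0$ with $h\cdot x\in U_g$ let $\chi_j(h,x)$ be defined by $z_j(h\cdot x)=\chi_j(h,x)z_j(x)$. Then for any $g\in G_0$, $t\in T$, $u\in P^u$, $x\in U_g$ and $j=1,\dots,r$: (a) $z_j(gtg^{-1}\cdot x)=\chi_j(gtg^{-1},x)\,z_j(x)=\gamma_j(t)\,z_j(x)$; (b) $z_j(gug^{-1}\cdot x)=z_j(x)$.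
   Context: Let $\mathbf G$ be a connected reductive complex algebraic group, $\sigma$ an anti-holomorphic involution of $\mathbf G$ defining a split real form $G=\mathbf G^\sigma=\{g\in\mathbf G:\sigma(g)=g\}$, and $G_0$ the identity component of $G$. Fix a $\sigma$-stable maximal torus $\mathbf T$ and a $\sigma$-stable Borel subgroup $\mathbf B\supset\mathbf T$; put $T=\mathbf T^\sigma$, $B=\mathbf B^\sigma$. A $\mathbf G$-variety $\mathbf X$ is wonderful of rank $r$ if it is smooth projective, has an open $\mathbf G$-orbit whose complement is a union of smooth prime divisors $\mathbf X_1,\dots,\mathbf X_r$ with normal crossings, and the $\mathbf G$-orbit closures are exactly the partial intersections of the $\mathbf X_i$; it is strict if all its points have self-normalizing stabilizers. A strict wonderful $\mathbf G$-variety carries a unique $\sigma$-equivariant real structure $\mu$ (an anti-holomorphic involution with $\mu(g\cdot x)=\sigma(g)\cdot\mu(x)$); its real locus $X$ is a nonempty smooth projective real algebraic $G_0$-variety with a unique closed $G_0$-orbit $Y$. Let $P\supset B$ be the standard parabolic subgroup with $Y\cong G_0/P_0$, and $P=P^uL$ its Levi decomposition with $T\subset L$; $P^u$ is connected and diffeomorphic to $\mathbb R^s$, with coordinates $p_1,\dots,p_s$. By the local structure theorem of Akhiezer–Cupit-Foutou there is a real algebraic $L$-subvariety $Z\subset X$ such that $P^u\times Z\to P^u\cdot Z$, $(p,z)\mapsto p\cdot z$, is a $P^u$-equivariant isomorphism onto an open subset of $X$, every $G_0$-orbit meets $Z$, the commutator $(L,L)$ acts trivially on $Z$, and $Z\cong\mathbb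 R^r$ (coordinates $z_1,\dots,z_r$) with $T$ acting by $t\cdot z=(\gamma_1(t)z_1,\dots,\gamma_r(t)z_r)$ for linearly independent characters $\gamma_1,\dots,\gamma_r$ of $T$ (the spherical roots). $L$ acts on $P^u\cdot Z$ by $l\cdot(p_u\cdot z)=(lp_ul^{-1})\cdot(l\cdot z)$. Let $\phi:\mathbb R^{s+r}\to P^u\cdot Z$ be the real-analytic diffeomorphism $(p_1,\dots,p_s,z_1,\dots,z_r)\mapsto p\cdot z$, and for $g\in G_0$ set $U_g=g\cdot(P^u\cdot Z)$ and $\phi_g=g\circ\phi:\mathbb R^{s+r}\to U_g$. *)

From mathcomp Require Import all_boot all_order all_algebra.
From mathcomp Require Import reals.
From Stdlib Require Import ClassicalEpsilon.
Set Implicit Arguments. Unset Strict Implicit. Unset Printing Implicit Defensive.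
Import Order.TTheory GRing.Theory Num.Theory.
Local Open Scope ring_scope.

Definition is_group (Gr : Type) (mul : Gr -> Gr -> Gr) (one : Gr) (inv : Gr -> Gr) :=
  [/\ forall a b c, mul a (mul b c) = mul (mul a b) c,
      forall a, mul one a = a, forall a, mul a one = a,
      forall a, mul (inv a) a = one & forall a, mul a (inv a) = one].

Definition is_subgroup (Gr : Type) (mul : Gr -> Gr -> Gr) (one : Gr) (inv : Gr -> Gr)
  (H : Gr -> Prop) :=
  [/\ H one, forall a b, H a -> H b -> H (mul a b) & forall a, H a -> H (inv a)].

Definition is_action (Gr X : Type) (mul : Gr -> Gr -> Gr) (one : Gr) (act : Gr -> X -> X) :=
  (forall x, act one x = x) /\ (forall a b x, act (mul a b) x = act a (act b x)).

Definition lst_chart (R : realType) (Gr X : Type) (act : Gr -> X -> X) (s r : nat)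
  (pcoord : 'rV[R]_s -> Gr) (zcoord : 'rV[R]_r -> X) (v : 'rV[R]_(s + r)) : X :=
  act (pcoord (lsubmx v)) (zcoord (rsubmx v)).

(* phi_g^{-1} : U_g -> R^{s+r}: for x = g . phi(v), returns v
   (the chosen preimage, unique when phi is injective). *)
Definition chart_inv (R : realType) (Gr X : Type) (act : Gr -> X -> X) (s r : nat)
  (phi : 'rV[R]_(s + r) -> X) (g : Gr) (x : X) : 'rV[R]_(s + r) :=
  epsilon (inhabits 0) (fun v => act g (phi v) = x).

Definition zcoord_j (R : realType) (Gr X : Type) (act : Gr -> X -> X) (s r : nat)
  (phi : 'rV[R]_(s + r) -> X) (g : Gr) (j : 'I_r) (x : X) : R :=
  chart_inv act phi g x 0 (rshift s j).

(* chi_j(h, x) defined by z_j(h.x) = chi_j(h,x) z_j(x), i.e. the quotient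
   (with the MathComp convention a / 0 = 0). *)
Definition chi_j (R : realType) (Gr X : Type) (act : Gr -> X -> X) (s r : nat)
  (phi : 'rV[R]_(s + r) -> X) (g : Gr) (j : 'I_r) (h : Gr) (x : X) : R :=
  zcoord_j act phi g j (act h x) / zcoord_j act phi g j x.

From mathcomp Require Import all_boot all_order all_algebra.
From mathcomp Require Import reals.
From Stdlib Require Import ClassicalEpsilon.
Set Implicit Arguments. Unset Strict Implicit. Unset Printing Implicit Defensive.
Import Order.TTheory GRing.Theory Num.Theory.
Local Open Scope ring_scope.

(* Conjugating by g transports the chart phi to phi_g = g o phi, so it suffices
   to see how t and u move a point p . z of P^u . Z.  Since t normalizes P^u,
   t . (p . z) = (t p t^-1) . (t . z), and t . z rescales the coordinates of z by
   the gamma_j(t); while u . (p . z) = (u p) . z leaves z unchanged.  The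
   injectivity of (p, z) |-> p . z then lets one read off the Z-coordinates. *)

Section GroupAction.
Variables (Gr X : Type) (mul : Gr -> Gr -> Gr) (one : Gr) (inv : Gr -> Gr).
Variable act : Gr -> X -> X.
Hypotheses (HG : is_group mul one inv) (Hact : is_action mul one act).

Lemma act_invK g : cancel (act g) (act (inv g)).
Proof.
by case: HG Hact => _ _ _ mulVg _ [act1 actM] y; rewrite -actM mulVg act1.
Qed.

Lemma act_conjg g a y : act (mul g (mul a (inv g))) (act g y) = act g (act a y).
Proof. by case: Hact => _ actM; rewrite !actM act_invK. Qed.

End GroupAction.

Section ChartCoordinates.
Variables (R : realType) (Gr X : Type) (mul : Gr -> Gr -> Gr) (one : Gr).
Variables (inv : Gr -> Gr) (act : Gr -> X -> X) (s r : nat).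
Hypotheses (HG : is_group mul one inv) (Hact : is_action mul one act).

Lemma zcoord_j_chart (phi : 'rV[R]_(s + r) -> X) g j w :
  injective phi -> zcoord_j act phi g j (act g (phi w)) = w 0 (rshift s j).
Proof.
move=> phi_inj; rewrite /zcoord_j /chart_inv.
set U_w := fun v => act g (phi v) = act g (phi w).
have /(congr1 (act (inv g))) : U_w (epsilon (inhabits 0) U_w).
  by apply: epsilon_spec; exists w.
by rewrite !(act_invK HG Hact) => /phi_inj ->.
Qed.

Lemma zcoord_j_conjg_chart (phi : 'rV[R]_(s + r) -> X) g a j v w :
  injective phi -> act a (phi v) = phi w ->
  zcoord_j act phi g j (act (mul g (mul a (inv g))) (act g (phi v)))
    = w 0 (rshift s j).
Proof.
by move=> phi_inj avw; rewrite (act_conjg HG Hact) avw zcoord_j_chart.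
Qed.

Lemma chi_jK (phi : 'rV[R]_(s + r) -> X) g j h x c :
  zcoord_j act phi g j (act h x) = c * zcoord_j act phi g j x ->
  chi_j act phi g j h x * zcoord_j act phi g j x = zcoord_j act phi g j (act h x).
Proof.
rewrite /chi_j => ->; have [->|nz] := eqVneq (zcoord_j act phi g j x) 0.
  by rewrite !mulr0.
by rewrite divfK.
Qed.

Variables (pcoord : 'rV[R]_s -> Gr) (zcoord : 'rV[R]_r -> X).
Let phi := lst_chart act pcoord zcoord.

Lemma lst_chart_row_mx q z : phi (row_mx q z) = act (pcoord q) (zcoord z).
Proof. by rewrite /phi /lst_chart row_mxKl row_mxKr. Qed.

Lemma act_lst_chart_normalizing a v q z :
  pcoord q = mul a (mul (pcoord (lsubmx v)) (inv a)) ->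
  act a (zcoord (rsubmx v)) = zcoord z ->
  act a (phi v) = phi (row_mx q z).
Proof.
move=> Eq Ez; rewrite lst_chart_row_mx Eq -Ez (act_conjg HG Hact).
by rewrite /phi /lst_chart.
Qed.

Lemma act_lst_chart_mul p v q :
  pcoord q = mul (pcoord p) (pcoord (lsubmx v)) ->
  act (pcoord p) (phi v) = phi (row_mx q (rsubmx v)).
Proof.
by case: Hact => _ actM Eq; rewrite lst_chart_row_mx Eq actM.
Qed.

End ChartCoordinates.

Theorem corollary4
  (R : realType)
  (* the real group G with identity component G0, subgroups T, L, P^u *)
  (Gr : Type) (mul : Gr -> Gr -> Gr) (one : Gr) (inv : Gr -> Gr)
  (G0 T L : Gr -> Prop)
  (* the real locus X with its G-action *)
  (X : Type) (act : Gr -> X -> X)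
  (s r : nat)
  (pcoord : 'rV[R]_s -> Gr)      (* coordinates p_1..p_s of P^u *)
  (zcoord : 'rV[R]_r -> X)       (* coordinates z_1..z_r of Z *)
  (gamma : 'I_r -> Gr -> R)      (* spherical roots gamma_1..gamma_r *)
  (HG : is_group mul one inv)
  (HG0 : is_subgroup mul one inv G0)
  (HT : is_subgroup mul one inv T)
  (HL : is_subgroup mul one inv L)
  (HTL : forall t, T t -> L t)
  (Hact : is_action mul one act)
  (* P^u = image of pcoord, a subgroup normalized by L, pcoord bijective onto P^u *)
  (HPu : is_subgroup mul one inv (fun a => exists p, pcoord p = a))
  (Hpinj : injective pcoord)
  (HLnorm : forall l p, L l -> exists q, pcoord q = mul l (mul (pcoord p) (inv l)))
  (* Z = image of zcoord, zcoord injective *)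
  (Hzinj : injective zcoord)
  (* local structure: P^u x Z -> P^u . Z, (p, z) |-> p . z is injective *)
  (Hlst : injective (lst_chart act pcoord zcoord))
  (* T acts on Z through the characters gamma_j *)
  (Hgamma_char : forall j t1 t2, T t1 -> T t2 ->
      gamma j (mul t1 t2) = gamma j t1 * gamma j t2)
  (Hgamma_unit : forall j t, T t -> gamma j t != 0)
  (HTZ : forall t z, T t ->
      act t (zcoord z) = zcoord (\row_(j < r) (gamma j t * z 0 j))) :
  let phi := lst_chart act pcoord zcoord in
  forall (g t : Gr) (p : 'rV[R]_s) (x : X) (j : 'I_r),
    G0 g -> T t ->
    (exists v, act g (phi v) = x) ->           (* x in U_g *)
    (zcoord_j act phi g j (act (mul g (mul t (inv g))) x)
       = chi_j act phi g j (mul g (mul t (inv g))) x * zcoord_j act phi g j x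
     /\ chi_j act phi g j (mul g (mul t (inv g))) x * zcoord_j act phi g j x
       = gamma j t * zcoord_j act phi g j x)
    /\ zcoord_j act phi g j (act (mul g (mul (pcoord p) (inv g))) x)
       = zcoord_j act phi g j x.
Proof.
move=> phi g t p x j _ Tt [v <-].
have z_x : zcoord_j act phi g j (act g (phi v)) = rsubmx v 0 j.
  by rewrite (zcoord_j_chart HG Hact) // mxE.
have [qt Eqt] := HLnorm t (lsubmx v) (HTL t Tt).
have z_tx : zcoord_j act phi g j (act (mul g (mul t (inv g))) (act g (phi v)))
    = gamma j t * zcoord_j act phi g j (act g (phi v)).
  rewrite z_x (zcoord_j_conjg_chart HG Hact g j Hlst
    (act_lst_chart_normalizing HG Hact Eqt (HTZ _ _ Tt))) //.
  by rewrite row_mxEr mxE.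
have [_ PuM _] := HPu.
have [qu Equ] := PuM _ _ (ex_intro _ p erefl) (ex_intro _ (lsubmx v) erefl).
split; last first.
  rewrite (zcoord_j_conjg_chart HG Hact g j Hlst
    (act_lst_chart_mul Hact zcoord Equ)) //.
  by rewrite row_mxEr z_x.
by rewrite (chi_jK z_tx) z_tx.
Qed.
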